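(* Let $\mathcal{S}$ be a nonempty semigroup with set of idempotents $E(\mathcal{S})$. Let $T$ be a finite $\mathcal{S}$-valued sequence with $\prod(T)\cap E(\mathcal{S})=\emptyset$, let $x$ be a term of $T$, and let $T'$ denote the sequence obtained from $T$ by deleting one occurrence of the term $x$. Then $|\prod(T)\setminus \prod(T')|\ge 1$ (equivalently, $\lambda_{T'}(x)=|\prod(T'\cdot x)\setminus\prod(T')|\ge 1$, where $T'\cdot x$ is $T'$ with $x$ appended).
   Context: For a finite sequence $T=x_1x_2\cdots x_\ell$ of elements of a semigroup $(\mathcal{S},* )$, $\prod(T)$ denotes the set of all products $x_{i_{\sigma(1)}}*x_{i_{\sigma(2)}}*\cdots*x_{i_{\sigma(k)}}$, where $x_{i_1}\cdots x_{i_k}$ ranges over all nonempty subsequences of $T$ and $\sigma$ over all permutations of $\{1,\dots,k\}$ (so $\prod$ of the empty sequence is $\emptyset$). $E(\mathcal{S})$ is the set of $e\in\mathcal{S}$ with $e*e=e$. *)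

From mathcomp Require Import all_boot.
From Stdlib Require Import Permutation.
Set Implicit Arguments. Unset Strict Implicit. Unset Printing Implicit Defensive.

(* A semigroup is a type S with an associative binary operation op
   (the associativity hypothesis is an explicit binder of the theorem). *)

Definition seqprod {S : Type} (op : S -> S -> S) (s : seq S) (y : S) : Prop :=
  match s with
  | [::] => False
  | x :: s' => y = foldl op x s'
  end.

(* Pi(T): all products of all nonempty subsequences of T, in every order.
   A subsequence is [mask m T]; an ordering of it is any Stdlib Permutation. *)
Definition Prods {S : Type} (op : S -> S -> S) (T : seq S) : S -> Prop :=
  fun y => exists (m : bitseq) (s : seq S),
      Permutation (mask m T) s /\ seqprod op s y.

Definition idempotent_el {S : Type} (op : S -> S -> S) (e : S) : Prop := op e e = e.

(** If every product of [T] were already a product of [T'], then [Π(T')]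
    would be closed under right multiplication by [x]; since [x] itself lies
    in [Π(T)], all powers of [x] would lie in [Π(T')].  But [Π(T')] is finite,
    so two powers [x^i = x^j] with [i < j] coincide, and then a suitable
    multiple of the period [j - i] gives an idempotent power of [x], which is
    a product of [T] — contradicting [Π(T) ∩ E(S) = ∅]. *)

From mathcomp Require Import all_boot zify.
From Stdlib Require Import Permutation Classical.
From Stdlib Require List.

Set Implicit Arguments.
Unset Strict Implicit.
Unset Printing Implicit Defensive.

Lemma size_mask_le (T : Type) (m : bitseq) (s : seq T) :
  size (mask m s) <= size s.
Proof. by have [m1 m1_s ->] := resize_mask m s; rewrite size_mask // -m1_s count_size. Qed.

Lemma In_mask (T : Type) (m : bitseq) (s : seq T) (a : T) :
  List.In a (mask m s) -> List.In a s.
Proof.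
elim: s m => [|b s IHs] [|[] m] //= => [[->|/IHs]|/IHs]; by [left | right].
Qed.

Lemma Permutation_mask_insert (T : Type) (x : T) (T1 T2 : seq T) (m : bitseq) :
  exists m', Permutation (mask m' (T1 ++ x :: T2)) (mask m (T1 ++ T2) ++ [:: x]).
Proof.
elim: T1 m => [|a T1 IHT1] m /=.
  by exists (true :: m); apply: Permutation_cons_append.
case: m => [|[] m].
- by have [m' Hm'] := IHT1 [::]; exists (false :: m').
- by have [m' Hm'] := IHT1 m; exists (true :: m'); apply: perm_skip.
- by have [m' Hm'] := IHT1 m; exists (false :: m').
Qed.

Fixpoint words {T : Type} (n : nat) (A : seq T) : seq (seq T) :=
  match n with
  | 0 => [:: [::]]
  | n'.+1 =>
      [::] :: List.concat (List.map (fun a => List.map (cons a) (words n' A)) A)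
  end.

Lemma In_words (T : Type) (n : nat) (A w : seq T) :
  size w <= n -> (forall a, List.In a w -> List.In a A) -> List.In w (words n A).
Proof.
elim: n w => [|n IHn] [|a w] //= w_le w_A; [by left | by left | right].
apply/List.in_concat; exists (List.map (cons a) (words n A)); split.
- by apply/List.in_map_iff; exists a; split; last by apply: w_A; left.
- by apply/List.in_map/IHn => // b Hb; apply: w_A; right.
Qed.

Lemma Prods_finite (S : Type) (op : S -> S -> S) (T : seq S) :
  exists L, forall y, Prods op T y -> List.In y L.
Proof.
exists (List.flat_map (fun w => if w is a :: w' then [:: foldl op a w'] else [::])
                      (words (size T) T)).
move=> y [m [s [perm_s prod_s]]]; apply/List.in_flat_map; exists s; split.
- apply: In_words => [|a Ha].
  + have size_s : size (mask m T) = size s := Permutation_length perm_s.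
    by rewrite -size_s size_mask_le.
  + exact: In_mask (Permutation_in _ (Permutation_sym perm_s) Ha).
- by case: s perm_s prod_s => [|a s] //= _ ->; left.
Qed.

Lemma In_repeat (T : Type) (f : nat -> T) (L : seq T) :
  (forall k, List.In (f k) L) -> exists i j, i < j /\ f i = f j.
Proof.
elim: L f => [|a L IHL] f f_L; first by case: (f_L 0).
apply: NNPP => no_repeat.
have hit_once k k' : f k = a -> f k' = a -> k = k'.
  move=> fk fk'; case: (ltngtP k k') => // [lt_kk'|lt_k'k]; case: no_repeat.
  - by exists k, k'; rewrite fk fk'.
  - by exists k', k; rewrite fk fk'.
have [s avoid_a] : exists s, forall k, f (k + s) <> a.
  case: (classic (exists k0, f k0 = a)) => [[k0 fk0]|no_a].
  - by exists k0.+1 => k /(hit_once _ _)/(_ fk0); lia.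
  - by exists 0 => k fk; apply: no_a; exists (k + 0).
have [i [j [lt_ij eq_ij]]] : exists i j, i < j /\ f (i + s) = f (j + s).
  by apply: IHL => k; case: (f_L (k + s)) => // /esym /avoid_a.
by case: no_repeat; exists (i + s), (j + s); rewrite ltn_add2r.
Qed.

Section Powers.

Variables (S : Type) (op : S -> S -> S).
Hypothesis op_assoc : forall a b c, op a (op b c) = op (op a b) c.

(** [power x n] is [x^(n+1)]. *)
Definition power (x : S) (n : nat) : S := iter n (fun y => op y x) x.

Lemma powerD x m n : power x (m + n.+1) = op (power x m) (power x n).
Proof. by elim: n => [|n IHn]; rewrite ?addn1 // addnS /= IHn op_assoc. Qed.

Lemma power_periodic x i d : power x i = power x (i + d) ->
  forall t q, power x (i + t + q * d) = power x (i + t).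
Proof.
move=> period t q; elim: q => [|q IHq]; first by rewrite addn0.
have shift u : power x (i + u + d) = power x (i + u).
  by elim: u => [|u IHu]; rewrite ?addn0 // addnS addSn /= IHu.
have -> : i + t + q.+1 * d = i + (t + q * d) + d by rewrite mulSn; lia.
by rewrite shift addnA IHq.
Qed.

Lemma idempotent_power_of_repeat x i j :
  i < j -> power x i = power x j -> exists n, idempotent_el op (power x n).
Proof.
move=> lt_ij eq_ij; set d := j - i.
have d_gt0 : 0 < d by rewrite subn_gt0.
have period : power x i = power x (i + d) by rewrite subnKC // ltnW.
(* With [M = (i+1) d], the power [x^M] is idempotent: [x^M x^M = x^(M + M)]
   and [M >= i + 1] is a multiple of the period. *)
set M := i.+1 * d.
have i_le_M : i <= M.-1 by rewrite /M; nia.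
exists M.-1; rewrite /idempotent_el -powerD prednK ?muln_gt0 //.
by rewrite -(subnKC i_le_M) (power_periodic period).
Qed.

Lemma idempotent_power_of_finite x (L : seq S) :
  (forall k, List.In (power x k) L) -> exists n, idempotent_el op (power x n).
Proof.
by move=> /In_repeat [i [j [lt_ij eq_ij]]]; exact: idempotent_power_of_repeat eq_ij.
Qed.

End Powers.

Lemma Prods_insert_term (S : Type) (op : S -> S -> S) (T1 T2 : seq S) (x : S) :
  Prods op (T1 ++ x :: T2) x.
Proof.
by have [m' Hm'] := Permutation_mask_insert x T1 T2 [::]; exists m', [:: x].
Qed.

Lemma Prods_insert_mulr (S : Type) (op : S -> S -> S) (T1 T2 : seq S) (x y : S) :
  Prods op (T1 ++ T2) y -> Prods op (T1 ++ x :: T2) (op y x).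
Proof.
move=> [m [s [perm_s prod_s]]]; have [m' Hm'] := Permutation_mask_insert x T1 T2 m.
exists m', (s ++ [:: x]); split.
  exact: Permutation_trans Hm' (Permutation_app_tail _ perm_s).
by case: s perm_s prod_s => [|a s] //= _ ->; rewrite foldl_cat.
Qed.

Theorem lemma3p1 (S : Type) (op : S -> S -> S)
  (op_assoc : forall a b c, op a (op b c) = op (op a b) c)
  (S_nonempty : inhabited S)
  (T1 T2 : seq S) (x : S)
  (hE : forall e, Prods op (T1 ++ x :: T2) e -> ~ idempotent_el op e) :
  exists y, Prods op (T1 ++ x :: T2) y /\ ~ Prods op (T1 ++ T2) y.
Proof.
apply: NNPP => no_new_product.
have Prods_sub y : Prods op (T1 ++ x :: T2) y -> Prods op (T1 ++ T2) y.
  by move=> Py; apply: NNPP => Py'; apply: no_new_product; exists y.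
have Prods_power k : Prods op (T1 ++ x :: T2) (power op x k).
  elim: k => [|k IHk]; first exact: Prods_insert_term.
  exact/Prods_insert_mulr/Prods_sub.
have [L cover] := Prods_finite op (T1 ++ x :: T2).
have [n idem] := idempotent_power_of_finite op_assoc (fun k => cover _ (Prods_power k)).
exact: hE (Prods_power n) idem.
Qed.
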